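(* Let $\ell\ge1$ and let $C=(w_1,\dots,w_{2\ell+1})$ be a semi-valid tuple in $\Omega_n$ which is not $(i,2\ell+1)$-consecutive for any $i$. Then there exist $i$ and $k$ with $1\le k\le\ell$ such that $C$ is $(i,k)$-consecutive and both $C_{i,k,-1}$ and $C_{i,k,1}$ are semi-valid.
   Context: $\Omega_n=\{v_0,\dots,v_{n-1}\}$ with cyclic order $v_0<\dots<v_{n-1}<v_0$, indices of $v$ mod $n$. A tuple $C=(w_1,\dots,w_{2\ell+1})$ of distinct vertices is semi-valid if $w_1<w_3<\dots<w_{2\ell+1}<w_2<w_4<\dots<w_{2\ell}<w_1$ in clockwise cyclic order; indices of the $w$'s are mod $2\ell+1$. $C$ is $(i,k)$-consecutive if there is $j$ with $w_{i+2s}=v_{j+s}$ for all $0\le s<k$. In that case, for an integer $m$, $C_{i,k,m}$ is the tuple obtained from $C$ by replacing $w_{i+2s}$ with $v_{j+s+m}$ for $0\le s<k$ and keeping all other entries. *)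

From mathcomp Require Import all_boot all_order all_algebra.
Set Implicit Arguments. Unset Strict Implicit. Unset Printing Implicit Defensive.

(* Vertices of Omega_n: v_j is the ordinal j : 'I_n, cyclic order = increasing
   value, indices mod n.  A tuple C = (w_1,...,w_{2l+1}) is a
   (l.*2.+1).-tuple 'I_n; position p (0-based) holds w_{p+1}; positions are
   read mod 2l+1. *)

Definition vshift n (d : int) (x : 'I_n) : 'I_n :=
  match d with
  | Posz k => iter k (@ordS n) x
  | Negz k => iter k.+1 (@ord_pred n) x
  end.

Definition wat n l (C : (l.*2.+1).-tuple 'I_n) (p : nat) : 'I_n :=
  tnth C (inord (p %% l.*2.+1)).

Definition cyc_ordered n (s : seq 'I_n) : Prop :=
  exists r, sorted ltn (rot r (map val s)).

(* w_1 < w_3 < ... < w_{2l+1} < w_2 < w_4 < ... < w_{2l} < w_1, distinct *)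
Definition semi_valid n l (C : (l.*2.+1).-tuple 'I_n) : Prop :=
  uniq C /\
  cyc_ordered ([seq wat C (2 * s) | s <- iota 0 l.+1] ++
               [seq wat C (2 * s + 1) | s <- iota 0 l]).

(* (i,k)-consecutive (i is the 0-based position of w_{i+1}) *)
Definition consecutive n l (C : (l.*2.+1).-tuple 'I_n) (i k : nat) : Prop :=
  exists j : 'I_n, forall s, s < k -> wat C (i + 2 * s) = vshift (Posz s) j.

(* C_{i,k,m}: the entries w_{i+2s} (0 <= s < k) equal v_{j+s}, and are
   replaced by v_{j+s+m} = vshift m (w_{i+2s}); other entries are kept. *)
Definition Cshift n l (C : (l.*2.+1).-tuple 'I_n) (i k : nat) (m : int)
  : (l.*2.+1).-tuple 'I_n :=
  [tuple (if [exists s : 'I_k, (i + 2 * s) %% l.*2.+1 == p]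
          then vshift m (tnth C p) else tnth C p) | p < l.*2.+1].

From mathcomp Require Import all_boot all_order all_algebra zify.
Set Implicit Arguments. Unset Strict Implicit. Unset Printing Implicit Defensive.

(* Read C as w_1, w_3, ..., w_{2l+1}, w_2, ..., w_{2l}: step t visits position
   2t mod 2l+1.  Semi-validity says that the vertex indices along this walk
   increase cyclically, i.e. that they lift to a strictly increasing H on nat
   with H (t + 2l+1) = H t + n.  Call t a gap when H (t+1) > H t + 1.  As C is
   not (i, 2l+1)-consecutive, every period contains two gaps, so two successive
   gaps lie at distance k <= l.  The k entries strictly after the first of them
   are consecutive vertices with a free vertex on either side, so moving them
   by -1 or +1 keeps the lift strictly increasing. *)

Definition gap (H : nat -> nat) (q : nat) : bool := (H q).+1 < H q.+1.

Lemma gap_shift H a q : gap (fun q => H (a + q)) q = gap H (a + q).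
Proof. by rewrite /gap addnS. Qed.

Section Lifts.
Variables n N : nat.

Definition cyc_increasing (f : nat -> nat) : Prop :=
  exists r, forall i, i.+1 < N -> f (r + i) < f (r + i).+1.

Definition lift_of (f H : nat -> nat) : Prop :=
  [/\ forall q, H q < H q.+1, forall q, H (q + N) = H q + n
    & forall q, H q %% n = f q].

Lemma lift_of_ext f f' H : f =1 f' -> lift_of f H -> lift_of f' H.
Proof. by move=> ff' [Hinc HN Hmod]; split=> // q; rewrite Hmod. Qed.

Lemma lift_of_shift f H a :
  lift_of f H -> lift_of (fun q => f (a + q)) (fun q => H (a + q)).
Proof. by move=> [Hinc HN Hmod]; split=> q; rewrite ?addnS ?addnA ?HN. Qed.

Lemma add_period_mul (H : nat -> nat) : (forall q, H (q + N) = H q + n) ->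
  forall a q, H (q + a * N) = H q + a * n.
Proof.
move=> HN; elim=> [|a IH] q; first by rewrite !mul0n !addn0.
by rewrite !mulSn (addnC N) addnA HN IH; lia.
Qed.

Lemma gap_period f H a q : lift_of f H -> gap H (q + a * N) = gap H q.
Proof.
move=> [_ HN _]; rewrite /gap -addSn !(add_period_mul HN).
by rewrite -addSn ltn_add2r.
Qed.

Lemma lift_run H c L : (forall q, H q < H q.+1) ->
  (forall e, e.+1 < L -> ~~ gap H (c + e)) ->
  forall s, s < L -> H (c + s) = H c + s.
Proof.
move=> Hinc nogap; elim=> [|s IH] sL; first by rewrite !addn0.
have := nogap s sL; have := Hinc (c + s); rewrite /gap -leqNgt IH 1?addnS; lia.
Qed.

Lemma lift_period_gt0 f H : 0 < N -> lift_of f H -> 0 < n.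
Proof.
move=> N_gt0 [Hinc HN _].
have := homo_ltn (@ltn_trans) Hinc N_gt0; rewrite -(add0n N) HN; lia.
Qed.

Lemma cyc_increasing_shift f c :
  cyc_increasing (fun q => f (c + q)) -> cyc_increasing f.
Proof. by move=> [r Hr]; exists (c + r) => i iN; rewrite -addnA -addnS Hr. Qed.

Lemma cyc_increasing_of_lift f H : 0 < N -> lift_of f H -> cyc_increasing f.
Proof.
move=> N_gt0 liftH; have n_gt0 := lift_period_gt0 N_gt0 liftH.
case: liftH => Hinc HN Hmod.
have Hmono_le : {homo H : p q / p <= q}.
  exact: homo_leq (@leqnn) (@leq_trans) (fun q => ltnW (Hinc q)).
(* Start at the first index where H reaches the multiple M of n above H 0:
   over one period from there, H stays in the block [M, M + n). *)
pose M := (H 0 %/ n).+1 * n.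
have H0_lt_M : H 0 < M by exact: ltn_ceil.
have M_le_HN : M <= H N by rewrite -(add0n N) HN /M mulSn addnC leq_add2r leq_divM.
have reach : exists q, M <= H q by exists N.
case: (ex_minnP reach) => r0 M_le_Hr0 r0_min.
have r0_gt0 : 0 < r0 by case: r0 M_le_Hr0 {r0_min} => //; rewrite leqNgt H0_lt_M.
have Hr0_pred : H r0.-1 < M by rewrite ltnNge; apply/negP => /r0_min; lia.
have window i : i < N -> M <= H (r0 + i) < M + n.
  move=> iN; rewrite (leq_trans M_le_Hr0 (Hmono_le _ _ (leq_addr _ _))) /=.
  apply: (@leq_ltn_trans (H (r0.-1 + N))); first by apply: Hmono_le; lia.
  by rewrite HN ltn_add2r.
have Hval i : i < N -> f (r0 + i) = H (r0 + i) - M.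
  move=> /window /andP [lo hi]; rewrite -Hmod.
  by rewrite -{1}(subnK lo) addnC modnMDl modn_small // ltn_subLR // addnC.
exists r0 => i iN; rewrite -addnS !Hval //; last exact: ltnW.
have /andP [lo _] := window i (ltnW iN).
by have := Hinc (r0 + i); rewrite -addnS; lia.
Qed.

Lemma lift_of_cyc_increasing f : 0 < N ->
  (forall t, f (t + N) = f t) -> (forall t, f t < n) -> cyc_increasing f ->
  exists r G, lift_of (fun q => f (r + q)) G.
Proof.
move=> N_gt0 fN f_lt [r Hr].
pose G q := f (r + q) + n * (q %/ N).
have GN q : G (q + N) = G q + n.
  by rewrite /G addnA fN divnDr ?dvdnn // divnn N_gt0 mulnDr muln1 addnA.
have Gsmall x : x < N -> G x = f (r + x) by move=> xN; rewrite /G divn_small // muln0 addn0.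
have G_inc_small x : x < N -> G x < G x.+1.
  move=> xN; case: (ltnP x.+1 N) => xN'; first by rewrite !Gsmall // addnS Hr.
  have -> : x.+1 = 0 + N by lia.
  by rewrite GN (Gsmall x) // (Gsmall 0) // ltn_addl.
exists r, G; split=> // q.
- rewrite (divn_eq q N) addnC -addSn !(add_period_mul GN) ltn_add2r.
  by apply: G_inc_small; rewrite ltn_pmod.
- by rewrite /G mulnC addnC modnMDl modn_small.
Qed.

End Lifts.

Lemma close_marks (b : pred nat) N : (forall t, b (t + N) = b t) ->
  (forall c, ~ (forall e, e.+1 < N -> ~~ b (c + e))) ->
  exists a k, [/\ 0 < k, k.*2 <= N, b a, b (a + k)
                & forall e, 0 < e < k -> ~~ b (a + e)].
Proof.
move=> bN no_long_run.
have mark c : exists2 e, e.+1 < N & b (c + e).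
  case: (boolP (has (fun e => b (c + e)) (iota 0 N.-1))) => [/hasP [e] | /hasPn none].
    by rewrite mem_iota => /andP [_ eN] be; exists e => //; lia.
  by case: (no_long_run c) => e eN; apply: none; rewrite mem_iota; lia.
have [p pN bp] := mark 0; have [e eN be] := mark p.+1.
pose P d := (0 < d) && has (fun a => b a && b (a + d)) (iota 0 (N + N)).
have P_first : P e.+1.
  by apply/andP; split=> //; apply/hasP; exists p; rewrite ?mem_iota ?bp -?addSnnS //; lia.
have P_second : P (N - e.+1).
  apply/andP; split; first lia.
  apply/hasP; exists (p.+1 + e); first by rewrite mem_iota; lia.
  by rewrite be (_ : _ + _ = p + N) ?bN //; lia.
have [k /andP [k_gt0 /hasP [a a_in /andP [ba bak]]] k_min] :=
  ex_minnP (ex_intro P _ P_first).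
have k_le1 := k_min _ P_first; have k_le2 := k_min _ P_second.
exists a, k; split=> //; first lia.
move=> e' /andP [e'_gt0 e'_lt]; apply/negP => bae.
suff /k_min : P e' by lia.
by apply/andP; split=> //; apply/hasP; exists a; rewrite ?ba.
Qed.

Section BlockShift.
Variables (n N k : nat) (f K : nat -> nat).
Hypotheses (N_gt0 : 0 < N) (liftK : lift_of n N f K).
Hypotheses (gap_end : gap K k.-1) (gap_start : gap K N.-1).

Lemma gap_at_block_boundary q : (q %% N < k) != (q.+1 %% N < k) -> gap K q.
Proof.
have -> : q.+1 %% N = (q %% N).+1 %% N by rewrite -addn1 -modnDml addn1.
have -> : gap K q = gap K (q %% N).
  by rewrite {1}(divn_eq q N) addnC (gap_period _ _ liftK).
have x_lt := ltn_pmod q N_gt0.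
case: (ltnP (q %% N).+1 N) => xN.
  rewrite (modn_small xN) => differ.
  by have -> : q %% N = k.-1 by move: differ; case: ltnP; case: ltnP => /=; lia.
have x_last : (q %% N).+1 = N by lia.
rewrite x_last modnn => differ.
by have -> : q %% N = N.-1 by lia.
Qed.

Lemma lift_of_block_up :
  lift_of n N (fun q => if q %% N < k then (f q).+1 %% n else f q)
              (fun q => K q + (q %% N < k)).
Proof.
have [Kinc KN Kmod] := liftK.
split=> q.
- have := Kinc q; have := @gap_at_block_boundary q; rewrite /gap.
  by case: (q %% N < k); case: (q.+1 %% N < k) => /=; lia.
- by rewrite modnDr KN addnAC.
- case: (q %% N < k); rewrite ?addn0 ?addn1 -Kmod //.
  by rewrite -[(K q).+1]addn1 -[(K q %% n).+1]addn1 modnDml.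
Qed.

(* Adding n keeps the subtraction from truncating. *)
Lemma lift_of_block_down :
  lift_of n N (fun q => if q %% N < k then (f q + n).-1 %% n else f q)
              (fun q => K q + n - (q %% N < k)).
Proof.
have [Kinc KN Kmod] := liftK.
have n_gt0 := lift_period_gt0 N_gt0 liftK.
split=> q.
- have := Kinc q; have := @gap_at_block_boundary q; rewrite /gap.
  by case: (q %% N < k); case: (q.+1 %% N < k) => /=; lia.
- by rewrite modnDr KN; lia.
- case: (q %% N < k); last by rewrite subn0 modnDr.
  rewrite -Kmod {1}(divn_eq (K q) n) -addnA -addnBA; last lia.
  by rewrite modnMDl subn1.
Qed.

End BlockShift.

Lemma rot_map_iota T N (g : nat -> T) r : r <= N -> (forall t, g (t + N) = g t) ->
  rot r [seq g t | t <- iota 0 N] = [seq g t | t <- iota r N].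
Proof.
move=> rN gN; rewrite /rot -map_drop -map_take drop_iota take_iota add0n.
rewrite (minn_idPl rN) -[in RHS](subnK rN) iotaD map_cat subnKC //.
congr (_ ++ _); rewrite -(addn0 N) iotaDl -map_comp.
by apply: eq_map => t /=; rewrite addnC gN.
Qed.

Lemma cyc_ordered_iota n N (F : nat -> 'I_n) : 0 < N -> (forall t, F (t + N) = F t) ->
  cyc_ordered [seq F t | t <- iota 0 N] <-> cyc_increasing N (fun t => val (F t)).
Proof.
move=> N_gt0 FN.
have valFN t : (val \o F) (t + N) = (val \o F) t by rewrite /= FN.
have Fmod t : F t = F (t %% N).
  rewrite {1}(divn_eq t N) addnC; elim: (t %/ N) => [|a IH]; first by rewrite addn0.
  by rewrite mulSn addnCA addnC FN.
rewrite /cyc_ordered -map_comp; split.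
  move=> [r]; case: (leqP r N) => rN; last first.
    rewrite rot_oversize ?size_map ?size_iota; last exact: ltnW.
    move=> /(sortedP 0) sorted_nth; exists 0 => i iN.
    have := sorted_nth i; rewrite size_map size_iota => /(_ iN).
    by rewrite !(nth_map 0) ?size_iota ?nth_iota //; lia.
  rewrite rot_map_iota // => /(sortedP 0) sorted_nth; exists r => i iN.
  have := sorted_nth i; rewrite size_map size_iota => /(_ iN).
  by rewrite !(nth_map 0) ?size_iota ?nth_iota //= ?add0n ?addnS //; lia.
move=> [r incr]; exists (r %% N).
rewrite rot_map_iota //; last by rewrite ltnW // ltn_pmod.
apply/(sortedP 0) => i; rewrite size_map size_iota => iN.
rewrite !(nth_map 0) ?size_iota ?nth_iota //= ?add0n; try lia.
by rewrite (Fmod (r %% N + i)) (Fmod (r %% N + i.+1)) !modnDml -!Fmod addnS incr.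
Qed.

Lemma cyc_ordered_uniq n (s : seq 'I_n) : cyc_ordered s -> uniq s.
Proof.
move=> [r /(sorted_uniq ltn_trans ltnn)]; rewrite rot_uniq.
exact: map_uniq.
Qed.

Lemma vshift_posE n s (j : 'I_n) : val (vshift (Posz s) j) = (j + s) %% n.
Proof.
elim: s => [|s IH]; first by rewrite addn0 modn_small.
rewrite /= in IH *.
by rewrite -addn1 -modnDml IH modn_mod modnDml addn1 addnS.
Qed.

(* l + 1 is the inverse of 2 modulo 2l + 1. *)
Lemma mod_odd_mul2n_inj l x y :
  2 * x = 2 * y %[mod l.*2.+1] -> x = y %[mod l.*2.+1].
Proof.
have half z : z %% l.*2.+1 = (2 * z %% l.*2.+1 * l.+1) %% l.*2.+1.
  by rewrite modnMml (_ : 2 * z * l.+1 = z * l.*2.+1 + z) ?modnMDl //; lia.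
by move=> E; rewrite half E -half.
Qed.

Section SemiValid.
Variables (n l : nat).
Local Notation N := l.*2.+1.
Implicit Types X : N.-tuple 'I_n.

Lemma wat_double_period X t : wat X (2 * (t + N)) = wat X (2 * t).
Proof. by rewrite /wat mulnDr addnC modnMDl. Qed.

Lemma semi_valid_seqE X :
  [seq wat X (2 * s) | s <- iota 0 l.+1] ++ [seq wat X (2 * s + 1) | s <- iota 0 l]
  = [seq wat X (2 * t) | t <- iota 0 N].
Proof.
rewrite (_ : N = l.+1 + l); last lia.
rewrite iotaD map_cat add0n -[X in _ = _ ++ map _ (iota X l)]addn0 iotaDl -map_comp.
congr (_ ++ _); apply: eq_map => s /=; rewrite /wat.
by rewrite -(modnDr (2 * s + 1)); congr (tnth X (inord (_ %% _))); lia.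
Qed.

Lemma semi_valid_cyc_increasing X :
  semi_valid X <-> cyc_increasing N (fun t => val (wat X (2 * t))).
Proof.
rewrite /semi_valid semi_valid_seqE -cyc_ordered_iota //; last exact: wat_double_period.
split=> [[] // | ordered]; split=> //.
apply: (leq_size_uniq (cyc_ordered_uniq ordered)).
  by move=> _ /mapP [t _ ->]; exact: mem_tnth.
by rewrite size_map size_iota size_tuple.
Qed.

Lemma semi_valid_liftP X :
  semi_valid X <-> exists c H, lift_of n N (fun q => val (wat X (2 * (c + q)))) H.
Proof.
rewrite semi_valid_cyc_increasing; split.
  apply: lift_of_cyc_increasing => // t; first by rewrite wat_double_period.
  exact: ltn_ord.
move=> [c [H liftH]]; apply: (@cyc_increasing_shift _ _ c).
exact: cyc_increasing_of_lift liftH.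
Qed.

Lemma lift_of_wat_shift X c a H :
  lift_of n N (fun q => val (wat X (2 * (c + q)))) H ->
  lift_of n N (fun q => val (wat X (2 * (c + a + q)))) (fun q => H (a + q)).
Proof. by move/(lift_of_shift a); apply: lift_of_ext => q; rewrite addnA. Qed.

Lemma consecutive_of_run X c a k H :
  lift_of n N (fun q => val (wat X (2 * (c + q)))) H ->
  (forall s, s < k -> H (a + s) = H a + s) -> consecutive X (2 * (c + a)) k.
Proof.
move=> [_ _ Hmod] run; exists (wat X (2 * (c + a))) => s sk; apply: val_inj.
by rewrite vshift_posE -mulnDr -addnA -!Hmod run // modnDml.
Qed.

Lemma wat_Cshift X c k m q : k < N ->
  wat (Cshift X (2 * c) k m) (2 * (c + q)) =
  if q %% N < k then vshift m (wat X (2 * (c + q))) else wat X (2 * (c + q)).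
Proof.
move=> kN; rewrite /wat /Cshift tnth_mktuple inordK ?ltn_pmod //.
congr (if _ then _ else _); apply/existsP/idP => [[s /eqP hs] | q_lt].
  rewrite -mulnDr in hs; move/mod_odd_mul2n_inj/eqP: hs.
  by rewrite eqn_modDl => /eqP <-; rewrite modn_small // (ltn_trans _ kN).
by exists (Ordinal q_lt); rewrite /= -mulnDr -modnMmr modnDmr modnMmr.
Qed.

Lemma semi_valid_Cshift_block X c k K : k < N ->
  lift_of n N (fun q => val (wat X (2 * (c + q)))) K ->
  gap K k.-1 -> gap K N.-1 ->
  semi_valid (Cshift X (2 * c) k (-1)%R) /\ semi_valid (Cshift X (2 * c) k 1%R).
Proof.
move=> kN liftK gap_end gap_start.
split; apply/semi_valid_liftP; exists c; eexists.
  apply: lift_of_ext (lift_of_block_down (ltn0Sn _) liftK gap_end gap_start) => q.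
  by rewrite wat_Cshift //; case: ifP.
apply: lift_of_ext (lift_of_block_up (ltn0Sn _) liftK gap_end gap_start) => q.
by rewrite wat_Cshift //; case: ifP.
Qed.

End SemiValid.

Theorem lemma3p8 (n l : nat) (C : (l.*2.+1).-tuple 'I_n) :
  1 <= l ->
  semi_valid C ->
  (forall i, ~ consecutive C i l.*2.+1) ->
  exists i k, [/\ 1 <= k <= l, consecutive C i k,
                  semi_valid (Cshift C i k (-1)%R) &
                  semi_valid (Cshift C i k 1%R)].
Proof.
move=> l_gt0 /semi_valid_liftP [r [G liftG]] not_cons.
have [G_inc _ _] := liftG.
have gapN t : gap G (t + l.*2.+1) = gap G t.
  by rewrite -[l.*2.+1]mul1n (gap_period _ _ liftG).
have no_long_run c : ~ (forall e, e.+1 < l.*2.+1 -> ~~ gap G (c + e)).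
  by move/(lift_run G_inc)/(consecutive_of_run liftG)/not_cons.
have [a [k [k_gt0 k_le gap_a gap_ak isolated]]] := close_marks gapN no_long_run.
have run s : s < k -> G (a.+1 + s) = G a.+1 + s.
  by apply: lift_run => // e ek; rewrite addSnnS isolated //; lia.
have [shift_down shift_up] : semi_valid (Cshift C (2 * (r + a.+1)) k (-1)%R) /\
                             semi_valid (Cshift C (2 * (r + a.+1)) k 1%R).
  apply: (semi_valid_Cshift_block _ (lift_of_wat_shift a.+1 liftG)); first lia.
    by rewrite gap_shift (_ : a.+1 + k.-1 = a + k) //; lia.
  by rewrite gap_shift (_ : a.+1 + _ = a + l.*2.+1) ?gapN //; lia.
exists (2 * (r + a.+1)), k; split=> //; first lia.
exact: consecutive_of_run liftG run.
Qed.
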